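(* For every $G\in C^2(\mathbb{R})$ there is a separately convex function $F:\mathbb{R}^2\to\mathbb{R}$ such that $F(t,t)=G(t)$ for each $t\in\mathbb{R}$.
   Context: A function $F:\mathbb{R}^2\to\mathbb{R}$ is called separately convex if it is convex on every line parallel to a coordinate axis. *)

From Stdlib Require Import Reals.
From Coquelicot Require Import Coquelicot.
Open Scope R_scope.

Definition convex_fun (f : R -> R) : Prop :=
  forall x y t : R, 0 <= t <= 1 ->
    f (t * x + (1 - t) * y) <= t * f x + (1 - t) * f y.

Definition separately_convex (F : R -> R -> R) : Prop :=
  (forall y : R, convex_fun (fun x => F x y)) /\
  (forall x : R, convex_fun (fun y => F x y)).

Definition C2 (G : R -> R) : Prop :=
  (forall x : R, ex_derive G x) /\
  (forall x : R, ex_derive (Derive G) x) /\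
  (forall x : R, continuous (Derive (Derive G)) x).

(* Put g = G''. If rho >= 0 is continuous, nondecreasing and zero on (-oo, 0], and H'' = rho
   with H(0) = H'(0) = 0, then E(x, y), the value at min(x, y) of the tangent line of -H at
   max(x, y), is separately convex with E(t, t) = -H(t): in x it is affine for x <= y, has the
   nondecreasing derivative rho(x) (x - y) for x >= y, and is the maximum of these two pieces.
   Let rho_1, rho_2 be the increments of the running maxima of -g(s) and -g(-s) over [0, t].
   Then g(t) + rho_1(t) + rho_2(-t) >= g(0), so C(t) = G(t) + H_1(t) + H_2(-t) - g(0) t^2 / 2
   is convex and F(x, y) = (C(x) + C(y)) / 2 + E_1(x, y) + E_2(-x, -y) + g(0) x y / 2 works. *)

From Stdlib Require Import Reals Lra ClassicalEpsilon.
From Coquelicot Require Import Coquelicot.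
Open Scope R_scope.

Lemma MVT_derive (f df : R -> R) (a b : R) :
  (forall x, is_derive f x (df x)) -> a <= b ->
  exists c, a <= c <= b /\ f b - f a = df c * (b - a).
Proof.
  intros Hd Hab.
  destruct (MVT_gen f a b df) as [c [Hc Hfc]].
  - intros x _; apply Hd.
  - intros x _; apply continuity_pt_filterlim.
    apply (ex_derive_continuous (K := R_AbsRing) (V := R_NormedModule)).
    now exists (df x).
  - rewrite Rmin_left, Rmax_right in Hc by lra. now exists c.
Qed.

Lemma le_of_derive_nonneg (f df : R -> R) (a b : R) :
  (forall x, is_derive f x (df x)) -> a <= b ->
  (forall c, a <= c <= b -> 0 <= df c) -> f a <= f b.
Proof.
  intros Hd Hab Hdf. destruct (MVT_derive f df a b Hd Hab) as [c [Hc Hfc]].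
  specialize (Hdf c Hc). nra.
Qed.

Lemma convex_chord_of_derive_le (f df : R -> R) (a : R) :
  (forall x, is_derive f x (df x)) ->
  (forall u v, a <= u -> u <= v -> df u <= df v) ->
  forall x z t, a <= x -> a <= z -> 0 <= t <= 1 ->
  f (t * x + (1 - t) * z) <= t * f x + (1 - t) * f z.
Proof.
  intros Hd Hdf.
  assert (Hord : forall x z t, a <= x -> x <= z -> 0 <= t <= 1 ->
    f (t * x + (1 - t) * z) <= t * f x + (1 - t) * f z).
  { intros x z t Hx Hxz Ht. set (c := t * x + (1 - t) * z).
    destruct (MVT_derive f df x c Hd) as [c1 [Hc1 Hfc1]]; [unfold c; nra|].
    destruct (MVT_derive f df c z Hd) as [c2 [Hc2 Hfc2]]; [unfold c; nra|].
    assert (Hslope : df c1 <= df c2) by (apply Hdf; lra).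
    replace (c - x) with ((1 - t) * (z - x)) in Hfc1 by (unfold c; ring).
    replace (z - c) with (t * (z - x)) in Hfc2 by (unfold c; ring).
    assert (Hw : 0 <= t * (1 - t) * (z - x)) by (apply Rmult_le_pos; nra).
    nra. }
  intros x z t Hx Hz Ht. destruct (Rle_dec x z).
  - now apply Hord.
  - replace (t * x + (1 - t) * z) with ((1 - t) * z + (1 - (1 - t)) * x) by ring.
    replace (t * f x + (1 - t) * f z) with ((1 - t) * f z + (1 - (1 - t)) * f x) by ring.
    apply Hord; lra.
Qed.

Lemma convex_fun_of_derive2 (f df ddf : R -> R) :
  (forall x, is_derive f x (df x)) -> (forall x, is_derive df x (ddf x)) ->
  (forall x, 0 <= ddf x) -> convex_fun f.
Proof.
  intros Hd Hdd Hpos x z t Ht.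
  apply (convex_chord_of_derive_le f df (Rmin x z)); auto using Rmin_l, Rmin_r.
  intros u v _ Huv. now apply (le_of_derive_nonneg df ddf).
Qed.

Lemma convex_fun_ext (f g : R -> R) :
  (forall x, f x = g x) -> convex_fun f -> convex_fun g.
Proof. intros E Hf x y t Ht. rewrite <- !E. now apply Hf. Qed.

Lemma convex_fun_max (f g : R -> R) :
  convex_fun f -> convex_fun g -> convex_fun (fun x => Rmax (f x) (g x)).
Proof.
  intros Hf Hg x y t Ht. specialize (Hf x y t Ht). specialize (Hg x y t Ht).
  pose proof (Rmax_l (f x) (g x)). pose proof (Rmax_r (f x) (g x)).
  pose proof (Rmax_l (f y) (g y)). pose proof (Rmax_r (f y) (g y)).
  apply Rmax_lub; nra.
Qed.

Lemma convex_fun_comp_opp (f : R -> R) :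
  convex_fun f -> convex_fun (fun x => f (- x)).
Proof.
  intros Hf x y t Ht.
  replace (- (t * x + (1 - t) * y)) with (t * - x + (1 - t) * - y) by ring.
  now apply Hf.
Qed.

Lemma separately_convex_plus (F1 F2 : R -> R -> R) :
  separately_convex F1 -> separately_convex F2 ->
  separately_convex (fun x y => F1 x y + F2 x y).
Proof.
  intros [H1x H1y] [H2x H2y]; split; intros u a b t Ht.
  - specialize (H1x u a b t Ht); specialize (H2x u a b t Ht); simpl in *; lra.
  - specialize (H1y u a b t Ht); specialize (H2y u a b t Ht); simpl in *; lra.
Qed.

Lemma separately_convex_opp (F : R -> R -> R) :
  separately_convex F -> separately_convex (fun x y => F (- x) (- y)).
Proof.
  intros [Hx Hy]; split; intros u.
  - exact (convex_fun_comp_opp (fun x => F x (- u)) (Hx (- u))).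
  - exact (convex_fun_comp_opp (fun y => F (- u) y) (Hy (- u))).
Qed.

Lemma separately_convex_mean (f : R -> R) :
  convex_fun f -> separately_convex (fun x y => (f x + f y) / 2).
Proof. intros Hf; split; intros u a b t Ht; specialize (Hf a b t Ht); lra. Qed.

Lemma separately_convex_bilinear (c : R) :
  separately_convex (fun x y => c * x * y).
Proof. split; intros u a b t Ht; apply Req_le; ring. Qed.

Section RunningMax.

Variable m : R -> R.
Hypothesis m_cont : forall x, continuous m x.

Definition runmax (u : R) : R :=
  m (epsilon (inhabits 0) (fun c => 0 <= c <= Rmax 0 u /\
       forall s, 0 <= s <= Rmax 0 u -> m s <= m c)).

Lemma runmax_spec (u : R) :
  exists c, 0 <= c <= Rmax 0 u /\ runmax u = m c /\
    forall s, 0 <= s <= Rmax 0 u -> m s <= runmax u.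
Proof.
  unfold runmax.
  match goal with |- context [epsilon ?i ?P] => pose proof (epsilon_spec i P) as Hc end.
  destruct Hc as [Hc Hmax].
  - destruct (continuity_ab_maj m 0 (Rmax 0 u)) as [c Hc]; [apply Rmax_l| |now exists c].
    intros x _; apply continuity_pt_filterlim, m_cont.
  - eexists; eauto.
Qed.

Lemma runmax_ge (u s : R) : 0 <= s <= Rmax 0 u -> m s <= runmax u.
Proof. destruct (runmax_spec u) as [c [_ [_ Hmax]]]. apply Hmax. Qed.

Lemma runmax_Rmax (u : R) : runmax (Rmax 0 u) = runmax u.
Proof. unfold runmax. now rewrite (Rmax_right 0 (Rmax 0 u)) by apply Rmax_l. Qed.

Lemma runmax_nonpos (u : R) : u <= 0 -> runmax u = m 0.
Proof.
  intros Hu. destruct (runmax_spec u) as [c [Hc [-> _]]].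
  rewrite Rmax_left in Hc by lra. f_equal; lra.
Qed.

Lemma runmax_le (u v : R) : u <= v -> runmax u <= runmax v.
Proof.
  intros Huv. destruct (runmax_spec u) as [c [Hc [-> _]]].
  apply runmax_ge. pose proof (Rle_max_compat_l u v 0 Huv). lra.
Qed.

Lemma runmax_le_split (a b M : R) : 0 <= a <= b ->
  (forall s, a <= s <= b -> m s <= M) -> runmax b <= Rmax (runmax a) M.
Proof.
  intros Hab HM. destruct (runmax_spec b) as [c [Hc [-> _]]].
  rewrite Rmax_right in Hc by lra. destruct (Rle_dec c a).
  - eapply Rle_trans; [|apply Rmax_l]. apply runmax_ge. rewrite Rmax_right; lra.
  - eapply Rle_trans; [|apply Rmax_r]. apply HM; lra.
Qed.

(* Moving the right end of [[0, u0]] by less than [d] changes the maximum only through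
   values of [m] within [eps/2] of [m u0]. *)
Lemma runmax_continuous (x : R) : continuous runmax x.
Proof.
  apply filterlim_locally. intros eps. set (u0 := Rmax 0 x).
  destruct (proj1 (filterlim_locally _ _) (m_cont u0) (pos_div_2 eps)) as [d Hd].
  exists d. intros y Hy. change (Rabs (y - x) < d) in Hy.
  change (Rabs (runmax y - runmax x) < eps).
  rewrite <- runmax_Rmax, <- (runmax_Rmax x). fold u0. set (u := Rmax 0 y).
  assert (Hu : 0 <= u) by apply Rmax_l. assert (Hu0 : 0 <= u0) by apply Rmax_l.
  assert (Hclose : Rabs (u - u0) < d).
  { eapply Rle_lt_trans; [|exact Hy]. unfold u, u0, Rmax, Rabs.
    repeat destruct Rle_dec; repeat destruct Rcase_abs; lra. }
  apply Rabs_def2 in Hclose.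
  assert (Hnear : forall s, u0 - d < s < u0 + d -> Rabs (m s - m u0) < eps / 2).
  { intros s Hs. apply (Hd s). change (Rabs (s - u0) < d). apply Rabs_def1; lra. }
  assert (Hm0 : m u0 <= runmax u0) by (apply runmax_ge; rewrite Rmax_right; lra).
  pose proof (cond_pos eps). destruct (Rle_dec u0 u).
  - assert (runmax u0 <= runmax u) by (apply runmax_le; lra).
    assert (Hsplit : runmax u <= Rmax (runmax u0) (m u0 + eps / 2)).
    { apply runmax_le_split; [lra|]. intros s Hs.
      assert (Hs' := Hnear s ltac:(lra)). apply Rabs_def2 in Hs'. lra. }
    apply Rmax_Rle in Hsplit. apply Rabs_def1; lra.
  - assert (runmax u <= runmax u0) by (apply runmax_le; lra).
    assert (Hsplit : runmax u0 <= Rmax (runmax u) (m u0 + eps / 2)).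
    { apply runmax_le_split; [lra|]. intros s Hs.
      assert (Hs' := Hnear s ltac:(lra)). apply Rabs_def2 in Hs'. lra. }
    assert (Hmu : m u0 < m u + eps / 2).
    { assert (Hu' := Hnear u ltac:(lra)). apply Rabs_def2 in Hu'. lra. }
    assert (m u <= runmax u) by (apply runmax_ge; rewrite Rmax_right; lra).
    apply Rmax_Rle in Hsplit. apply Rabs_def1; lra.
Qed.

Definition rise (t : R) : R := runmax t - m 0.

Lemma rise_continuous (x : R) : continuous rise x.
Proof.
  apply (continuous_minus runmax (fun _ => m 0)); [apply runmax_continuous|apply continuous_const].
Qed.

Lemma rise_le (u v : R) : u <= v -> rise u <= rise v.
Proof. intros Huv. unfold rise. pose proof (runmax_le u v Huv). lra. Qed.

Lemma rise_nonpos (t : R) : t <= 0 -> rise t = 0.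
Proof. intros Ht. unfold rise. rewrite runmax_nonpos by exact Ht. ring. Qed.

Lemma rise_nonneg (t : R) : 0 <= rise t.
Proof. rewrite <- (rise_nonpos (Rmin t 0)) by apply Rmin_r. apply rise_le, Rmin_l. Qed.

Lemma rise_ge (t : R) : 0 <= t -> m t - m 0 <= rise t.
Proof.
  intros Ht. unfold rise. assert (m t <= runmax t) by (apply runmax_ge; rewrite Rmax_right; lra).
  lra.
Qed.

End RunningMax.

Definition antider (f : R -> R) (t : R) : R := RInt f 0 t.

Lemma is_derive_antider (f : R -> R) (x : R) :
  (forall y, continuous f y) -> is_derive (antider f) x (f x).
Proof.
  intros Hf. apply (is_derive_RInt f (antider f) 0 x); [|apply Hf].
  apply filter_forall. intros b.
  exact (RInt_correct _ _ _ (ex_RInt_continuous _ _ _ (fun z _ => Hf z))).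
Qed.

Lemma antider_continuous (f : R -> R) (x : R) :
  (forall y, continuous f y) -> continuous (antider f) x.
Proof.
  intros Hf. apply (ex_derive_continuous (K := R_AbsRing) (V := R_NormedModule)).
  exists (f x). now apply is_derive_antider.
Qed.

Lemma is_derive_antider2 (f : R -> R) (x : R) :
  (forall y, continuous f y) -> is_derive (antider (antider f)) x (antider f x).
Proof. intros Hf. apply is_derive_antider. intros y. now apply antider_continuous. Qed.

Section SeparatelyConvexExtension.

Variable rho : R -> R.
Hypothesis rho_cont : forall x, continuous rho x.
Hypothesis rho_le : forall u v, u <= v -> rho u <= rho v.
Hypothesis rho_nonpos : forall x, x <= 0 -> rho x = 0.

Local Notation P := (antider rho).
Local Notation H := (antider (antider rho)).

Lemma rho_nonneg (x : R) : 0 <= rho x.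
Proof. rewrite <- (rho_nonpos (Rmin x 0)) by apply Rmin_r. apply rho_le, Rmin_l. Qed.

Let is_derive_P (x : R) : is_derive P x (rho x) := is_derive_antider rho x rho_cont.
Let is_derive_H (x : R) : is_derive H x (P x) := is_derive_antider2 rho x rho_cont.

Lemma antider_le (u v : R) : u <= v -> P u <= P v.
Proof. intros Huv. apply (le_of_derive_nonneg P rho); auto using is_derive_P, rho_nonneg. Qed.

Lemma antider_nonneg (x : R) : 0 <= P x.
Proof.
  assert (HP0 : P 0 = 0) by exact (RInt_point 0 rho).
  destruct (Rle_dec 0 x).
  - rewrite <- HP0. now apply antider_le.
  - destruct (MVT_derive P rho x 0 is_derive_P) as [c [Hc HPc]]; [lra|].
    rewrite rho_nonpos in HPc by lra. lra.
Qed.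

(* [sep_ext x y] is the tangent line of [-H] at [max x y], evaluated at [min x y]. *)
Definition sep_ext (x y : R) : R :=
  - H (Rmax x y) + P (Rmax x y) * (Rmax x y - Rmin x y).

Lemma sep_ext_comm (x y : R) : sep_ext x y = sep_ext y x.
Proof. unfold sep_ext. now rewrite Rmax_comm, Rmin_comm. Qed.

Lemma sep_ext_diag (t : R) : sep_ext t t = - H t.
Proof. unfold sep_ext. rewrite Rmax_left, Rmin_left by lra. ring. Qed.

Section FixedSecond.

Variable y : R.

Definition sep_ext_right (x : R) : R := - H x + P x * (x - y).

Lemma is_derive_sep_ext_right (x : R) : is_derive sep_ext_right x (rho x * (x - y)).
Proof.
  unfold sep_ext_right. auto_derive.
  - repeat split; eexists; [apply is_derive_H|apply is_derive_P].
  - change (fun z : R => H z) with H. change (fun z : R => P z) with P.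
    rewrite (is_derive_unique _ _ _ (is_derive_H x)), (is_derive_unique _ _ _ (is_derive_P x)).
    ring.
Qed.

Lemma sep_ext_right_le (u v : R) : y <= u -> u <= v -> sep_ext_right u <= sep_ext_right v.
Proof.
  intros Hyu Huv. apply (le_of_derive_nonneg _ _ u v is_derive_sep_ext_right Huv).
  intros c Hc. apply Rmult_le_pos; [apply rho_nonneg|lra].
Qed.

Lemma sep_ext_right_convex (x z t : R) : y <= x -> y <= z -> 0 <= t <= 1 ->
  sep_ext_right (t * x + (1 - t) * z) <= t * sep_ext_right x + (1 - t) * sep_ext_right z.
Proof.
  apply (convex_chord_of_derive_le _ _ y is_derive_sep_ext_right).
  intros u v Hyu Huv. pose proof (rho_le u v Huv). pose proof (rho_nonneg u). nra.
Qed.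

Lemma convex_sep_ext_right_max : convex_fun (fun x => sep_ext_right (Rmax x y)).
Proof.
  intros x z t Ht.
  pose proof (Rmax_l x y). pose proof (Rmax_r x y).
  pose proof (Rmax_l z y). pose proof (Rmax_r z y).
  eapply Rle_trans.
  - apply (sep_ext_right_le _ (t * Rmax x y + (1 - t) * Rmax z y)); [apply Rmax_r|].
    apply Rmax_lub; nra.
  - apply sep_ext_right_convex; lra.
Qed.

Lemma sep_ext_Rmax (x : R) :
  sep_ext x y = Rmax (- H y + P y * (y - x)) (sep_ext_right (Rmax x y)).
Proof.
  unfold sep_ext, sep_ext_right. pose proof (antider_nonneg y) as HPy. destruct (Rle_dec x y).
  - rewrite (Rmax_right x y), (Rmin_left x y), Rmax_left by nra. reflexivity.
  - rewrite (Rmax_left x y), (Rmin_right x y) by lra. rewrite Rmax_right; [reflexivity|].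
    destruct (MVT_derive H P y x is_derive_H) as [c [Hc HHc]]; [lra|].
    pose proof (antider_le c x ltac:(lra)). nra.
Qed.

Lemma convex_sep_ext_l : convex_fun (fun x => sep_ext x y).
Proof.
  apply (convex_fun_ext _ _ (fun x => eq_sym (sep_ext_Rmax x))).
  apply convex_fun_max; [|exact convex_sep_ext_right_max].
  intros a b t Ht. apply Req_le. ring.
Qed.

End FixedSecond.

Lemma separately_convex_sep_ext : separately_convex sep_ext.
Proof.
  split; [exact convex_sep_ext_l|].
  intros x. apply (convex_fun_ext _ _ (fun y => sep_ext_comm y x)), convex_sep_ext_l.
Qed.

End SeparatelyConvexExtension.

Lemma separately_convex_sep_ext_rise (m : R -> R) :
  (forall x, continuous m x) -> separately_convex (sep_ext (rise m)).
Proof.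
  intros Hm. apply separately_convex_sep_ext;
    [apply rise_continuous|apply rise_le|apply rise_nonpos]; exact Hm.
Qed.

Lemma continuous_Ropp_fun (f : R -> R) :
  (forall x, continuous f x) -> forall x, continuous (fun s => - f s) x.
Proof. intros Hf x. apply (continuous_opp f), Hf. Qed.

Lemma continuous_comp_Ropp (f : R -> R) :
  (forall x, continuous f x) -> forall x, continuous (fun s => f (- s)) x.
Proof.
  intros Hf x. apply (continuous_comp Ropp f); [|apply Hf].
  apply (continuous_opp (K := R_AbsRing) (V := R_NormedModule) (fun s => s)), continuous_id.
Qed.

Lemma rise_reflect_bound (g : R -> R) : (forall x, continuous g x) ->
  forall t, g 0 <= g t + rise (fun s => - g s) t + rise (fun s => - g (- s)) (- t).
Proof.
  intros Hg t.
  assert (Hg1 := continuous_Ropp_fun g Hg).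
  assert (Hg2 := continuous_Ropp_fun _ (continuous_comp_Ropp g Hg)).
  assert (Hrise1 : 0 <= rise (fun s => - g s) t)
    by exact (rise_nonneg _ Hg1 t).
  assert (Hrise2 : 0 <= rise (fun s => - g (- s)) (- t))
    by exact (rise_nonneg _ Hg2 (- t)).
  destruct (Rle_dec 0 t) as [Ht | Ht].
  - assert (Hge : - g t - - g 0 <= rise (fun s => - g s) t) by exact (rise_ge _ Hg1 t Ht).
    lra.
  - assert (Hge : - g (- - t) - - g (- 0) <= rise (fun s => - g (- s)) (- t))
      by exact (rise_ge _ Hg2 (- t) ltac:(lra)).
    rewrite Ropp_involutive, Ropp_0 in Hge. lra.
Qed.

Lemma convex_fun_add_antider2 (G r1 r2 : R -> R) (K : R) : C2 G ->
  (forall x, continuous r1 x) -> (forall x, continuous r2 x) ->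
  (forall t, 0 <= Derive (Derive G) t + r1 t + r2 (- t) + K) ->
  convex_fun (fun t => G t + antider (antider r1) t + antider (antider r2) (- t) + K / 2 * t ^ 2).
Proof.
  intros [HG1 [HG2 _]] Hr1 Hr2 Hpos.
  assert (HP1 : forall x, is_derive (antider r1) x (r1 x)) by (intros; now apply is_derive_antider).
  assert (HP2 : forall x, is_derive (antider r2) x (r2 x)) by (intros; now apply is_derive_antider).
  assert (HH1 : forall x, is_derive (antider (antider r1)) x (antider r1 x))
    by (intros; now apply is_derive_antider2).
  assert (HH2 : forall x, is_derive (antider (antider r2)) x (antider r2 x))
    by (intros; now apply is_derive_antider2).
  apply (convex_fun_of_derive2 _
    (fun t => Derive G t + antider r1 t - antider r2 (- t) + K * t)
    (fun t => Derive (Derive G) t + r1 t + r2 (- t) + K)); [| |exact Hpos].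
  - intros t. auto_derive.
    + repeat split; [apply HG1|eexists; apply HH1|eexists; apply HH2].
    + change (fun x : R => G x) with G.
      change (fun x : R => antider (antider r1) x) with (antider (antider r1)).
      change (fun x : R => antider (antider r2) x) with (antider (antider r2)).
      rewrite (is_derive_unique _ _ _ (HH1 t)), (is_derive_unique _ _ _ (HH2 (- t))).
      field.
  - intros t. auto_derive.
    + repeat split; [apply HG2|eexists; apply HP1|eexists; apply HP2].
    + change (fun x : R => Derive G x) with (Derive G).
      change (fun x : R => antider r1 x) with (antider r1).
      change (fun x : R => antider r2 x) with (antider r2).
      rewrite (is_derive_unique _ _ _ (HP1 t)), (is_derive_unique _ _ _ (HP2 (- t))).
      ring.
Qed.

Theorem lemma5p5 (G : R -> R) (hG : C2 G) :
  exists F : R -> R -> R, separately_convex F /\ forall t : R, F t t = G t.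
Proof.
  set (g := Derive (Derive G)).
  assert (Hg : forall x, continuous g x) by apply hG.
  assert (Hg1 := continuous_Ropp_fun g Hg).
  assert (Hg2 := continuous_Ropp_fun _ (continuous_comp_Ropp g Hg)).
  set (r1 := rise (fun s => - g s)). set (r2 := rise (fun s => - g (- s))).
  set (C := fun t => G t + antider (antider r1) t + antider (antider r2) (- t) + - g 0 / 2 * t ^ 2).
  assert (HC : convex_fun C).
  { apply convex_fun_add_antider2;
      [exact hG|apply rise_continuous, Hg1|apply rise_continuous, Hg2|].
    intros t. assert (Hbound : g 0 <= g t + r1 t + r2 (- t)) by exact (rise_reflect_bound g Hg t).
    change (0 <= g t + r1 t + r2 (- t) + - g 0). lra. }
  exists (fun x y => (C x + C y) / 2 + sep_ext r1 x y + sep_ext r2 (- x) (- y) + g 0 / 2 * x * y).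
  split.
  - apply separately_convex_plus; [|apply separately_convex_bilinear].
    apply separately_convex_plus;
      [|exact (separately_convex_opp _ (separately_convex_sep_ext_rise _ Hg2))].
    apply separately_convex_plus; [now apply separately_convex_mean|].
    exact (separately_convex_sep_ext_rise _ Hg1).
  - intros t. rewrite !sep_ext_diag. unfold C. field.
Qed.
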